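(* Let $\mu,\nu\in\mathfrak h^*_{\mathbb R}$ be small. If $\mu-\nu\in Q^\vee$, then $\mu=\nu$.
   Context: $\mathfrak h$ is a Cartan subalgebra of a complex semisimple Lie algebra with root system $\Delta\subset\mathfrak h^*$, invariant bilinear form $(\cdot,\cdot)$ normalized by $(\alpha,\alpha)=2$ for short roots, coroots $\alpha^\vee=2\alpha/(\alpha,\alpha)$ regarded in $\mathfrak h^*_{\mathbb R}$ via the form, and $Q^\vee$ the coroot lattice. A weight $\nu\in\mathfrak h^*_{\mathbb R}$ is called small if $(\nu,\alpha)<1$ for every $\alpha\in\Delta$. *)

From HB Require Import structures.
From mathcomp Require Import all_boot all_order all_algebra.
From mathcomp Require Import reals.
Set Implicit Arguments. Unset Strict Implicit. Unset Printing Implicit Defensive.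
Import Order.TTheory GRing.Theory Num.Theory.
Local Open Scope ring_scope.

(* h^*_R is modelled as R^n = 'rV[R]_n, with the invariant form transported to
   the standard dot product (any real inner product space of dimension n is
   isometric to this one). *)
Definition dot (R : realType) (n : nat) (u v : 'rV[R]_n) : R := (u *m v^T) 0 0.

(* Reduced crystallographic root system (= root system of a complex semisimple
   Lie algebra) spanning R^n. *)
Definition is_root_system (R : realType) (n : nat) (D : seq 'rV[R]_n) : Prop :=
  [/\ 0 \notin D,
      (<<D>> = fullv)%VS,
      (forall a b, a \in D -> b \in D ->
          b - ((2 * dot b a) / dot a a) *: a \in D),
      (forall a b, a \in D -> b \in D ->
          (2 * dot b a) / dot a a \is a Num.int)
    & (forall a (c : R), a \in D -> c *: a \in D -> c = 1 \/ c = -1)].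

(* Normalization (a,a) = 2 for the short roots (of every simple component):
   no root is shorter than 2, and every root is non-orthogonal to (hence in
   the same simple component as) some root of squared length 2. *)
Definition short_roots_normalized (R : realType) (n : nat) (D : seq 'rV[R]_n)
  : Prop :=
  (forall a, a \in D -> 2 <= dot a a) /\
  (forall a, a \in D -> exists2 b, b \in D & dot b b = 2 /\ dot a b != 0).

Definition coroot (R : realType) (n : nat) (a : 'rV[R]_n) : 'rV[R]_n :=
  (2 / dot a a) *: a.

Definition in_coroot_lattice (R : realType) (n : nat) (D : seq 'rV[R]_n)
  (x : 'rV[R]_n) : Prop :=
  exists c : 'I_(size D) -> int,
    x = \sum_(i < size D) (coroot (tnth (in_tuple D) i)) *~ c i.

Definition small (R : realType) (n : nat) (D : seq 'rV[R]_n) (v : 'rV[R]_n)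
  : Prop := forall a, a \in D -> dot v a < 1.

From HB Require Import structures.
From mathcomp Require Import all_boot all_order all_algebra.
From mathcomp Require Import reals.
From mathcomp Require Import ring lra zify.
Import Order.TTheory GRing.Theory Num.Theory.
Local Open Scope ring_scope.
Set Implicit Arguments. Unset Strict Implicit.

(* Every element of the coroot lattice is a sum of coroots of roots (the root
   system is closed under negation), and the sum can be rewritten so that the
   roots involved pairwise make non-obtuse angles: for an obtuse pair a, b one
   of the Cartan integers is -1, and then coroot a + coroot b is again a
   coroot, or both are <= -2 and the two coroots cancel.  If mu - nu is such a
   nonempty sum and g is one of its roots, then (mu - nu, g) >= (g^vee, g) = 2,
   whereas smallness of mu and nu (against g and -g) gives (mu - nu, g) < 2. *)

Section Dot.
Variables (R : realType) (n : nat).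
Implicit Types (u v w : 'rV[R]_n) (x y : R).

Lemma dotE u v : dot u v = \sum_j u 0 j * v 0 j.
Proof. by rewrite /dot !mxE; apply: eq_bigr => j _; rewrite mxE. Qed.

Lemma dotC u v : dot u v = dot v u.
Proof. by rewrite !dotE; apply: eq_bigr => j _; rewrite mulrC. Qed.

Lemma dotDl u v w : dot (u + v) w = dot u w + dot v w.
Proof. by rewrite !dotE -big_split; apply: eq_bigr => j _; rewrite mxE mulrDl. Qed.

Lemma dotZl x u w : dot (x *: u) w = x * dot u w.
Proof. by rewrite !dotE mulr_sumr; apply: eq_bigr => j _; rewrite mxE mulrA. Qed.

Lemma dotNl u w : dot (- u) w = - dot u w.
Proof. by rewrite -scaleN1r dotZl mulN1r. Qed.

Lemma dotBl u v w : dot (u - v) w = dot u w - dot v w.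
Proof. by rewrite dotDl dotNl. Qed.

Lemma dot_suml (I : Type) (s : seq I) (F : I -> 'rV[R]_n) w :
  dot (\sum_(i <- s) F i) w = \sum_(i <- s) dot (F i) w.
Proof.
elim: s => [|i s IH]; last by rewrite !big_cons dotDl IH.
by rewrite !big_nil dotE big1 // => j _; rewrite mxE mul0r.
Qed.

Lemma dot_ge0 u : 0 <= dot u u.
Proof. by rewrite dotE sumr_ge0 // => j _; rewrite -expr2 sqr_ge0. Qed.

Lemma dot_eq0 u : dot u u = 0 -> u = 0.
Proof.
rewrite dotE => /psumr_eq0P u0; apply/rowP => j; rewrite mxE.
by apply/eqP; rewrite -sqrf_eq0 expr2 u0 // => i _; rewrite -expr2 sqr_ge0.
Qed.

Lemma dot_lin2 x y u v :
  dot (x *: u + y *: v) (x *: u + y *: v) =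
  x ^+ 2 * dot u u + 2 * x * y * dot u v + y ^+ 2 * dot v v.
Proof. rewrite dotDl !dotZl (dotC u) (dotC v) !dotDl !dotZl (dotC v u); ring. Qed.

End Dot.

Section Coroots.
Variables (R : realType) (n : nat).
Implicit Types (a b : 'rV[R]_n).

Lemma corootN a : coroot (- a) = - coroot a.
Proof. by rewrite /coroot dotNl dotC dotNl opprK scalerN. Qed.

Lemma dot_coroot_self a : 0 < dot a a -> dot (coroot a) a = 2.
Proof. by move=> a_gt0; rewrite /coroot dotZl divfK // lt0r_neq0. Qed.

Lemma dot_reflect_self a b : 0 < dot b b ->
  dot (a - (2 * dot a b / dot b b) *: b) (a - (2 * dot a b / dot b b) *: b)
  = dot a a.
Proof.
move=> b_gt0; set k := 2 * dot a b / dot b b.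
have -> : a - k *: b = 1 *: a + (- k) *: b by rewrite scale1r scaleNr.
by rewrite dot_lin2 /k; field; apply: lt0r_neq0.
Qed.

Lemma coroot_reflect a b : 0 < dot a a -> 0 < dot b b ->
  2 * dot b a / dot a a = -1 ->
  coroot (a - (2 * dot a b / dot b b) *: b) = coroot a + coroot b.
Proof.
move=> a_gt0 b_gt0 kba.
have a_neq0 : dot a a != 0 by apply: lt0r_neq0.
have b_neq0 : dot b b != 0 by apply: lt0r_neq0.
have dab : 2 * dot a b = - dot a a by rewrite dotC -[LHS](divfK a_neq0) kba mulN1r.
rewrite /coroot dot_reflect_self // scalerBr scalerA.
have -> : 2 / dot a a * (2 * dot a b / dot b b) = - (2 / dot b b).
  by rewrite dab; field; apply/andP.
by rewrite scaleNr opprK.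
Qed.

Lemma coroot_add_eq0 a b : 0 < dot a a -> 0 < dot b b ->
  2 * dot b a / dot a a <= -2 -> 2 * dot a b / dot b b <= -2 ->
  coroot a + coroot b = 0.
Proof.
move=> a_gt0 b_gt0 kba kab; apply: dot_eq0; apply/eqP.
rewrite eq_le dot_ge0 andbT /coroot dot_lin2.
have -> : (2 / dot a a) ^+ 2 * dot a a
    + 2 * (2 / dot a a) * (2 / dot b b) * dot a b + (2 / dot b b) ^+ 2 * dot b b
    = 2 / dot a a * (2 + 2 * dot a b / dot b b)
    + 2 / dot b b * (2 + 2 * dot b a / dot a a).
  by rewrite (dotC b a); field; apply/andP; split; apply: lt0r_neq0.
have ca : 0 <= 2 / dot a a by rewrite divr_ge0 ?ltW.
have cb : 0 <= 2 / dot b b by rewrite divr_ge0 ?ltW.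
have kab' : 2 + 2 * dot a b / dot b b <= 0 by lra.
have kba' : 2 + 2 * dot b a / dot a a <= 0 by lra.
by have := mulr_ge0_le0 ca kab'; have := mulr_ge0_le0 cb kba'; lra.
Qed.

End Coroots.

Lemma int_lt0_neqN1_leN2 (R : realType) (x : R) :
  x \is a Num.int -> x < 0 -> x != -1 -> x <= -2.
Proof.
move=> /intrP[m ->]; rewrite ltrz0 => m_lt0 m_neqN1.
have m_neqN1' : m != -1 by apply: contraNneq m_neqN1 => ->.
have : m <= -2 by lia.
by rewrite -(ler_int R).
Qed.

Definition sum_coroots (R : realType) (n : nat) (L : seq 'rV[R]_n) : 'rV[R]_n :=
  \sum_(a <- L) coroot a.

Definition is_sum_of_coroots (R : realType) (n : nat) (D : seq 'rV[R]_n)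
    (x : 'rV[R]_n) : Prop :=
  exists2 L, all (mem D) L & x = sum_coroots L.

Definition non_obtuse (R : realType) (n : nat) (L : seq 'rV[R]_n) : Prop :=
  forall a b, a \in L -> b \in L -> 0 <= dot a b.

Section RootSystem.
Variables (R : realType) (n : nat) (D : seq 'rV[R]_n).
Hypothesis hD : is_root_system D.

Lemma root_dot_gt0 a : a \in D -> 0 < dot a a.
Proof.
case: hD => D0 _ _ _ _ aD; rewrite lt_def dot_ge0 andbT.
by apply: contraNneq D0 => /dot_eq0 a0; rewrite -a0.
Qed.

Lemma rootN a : a \in D -> - a \in D.
Proof.
move=> aD; case: hD => _ _ refl _ _; have := refl a a aD aD.
by rewrite mulfK ?lt0r_neq0 ?root_dot_gt0 // scaler_nat mulr2n opprD addrA subrr add0r.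
Qed.

Lemma obtuse_roots_coroot_add a b : a \in D -> b \in D -> dot a b < 0 ->
  (exists2 r, r \in D & coroot r = coroot a + coroot b) \/
  coroot a + coroot b = 0.
Proof.
move=> aD bD dab; case: hD => _ _ refl cartan _.
have a_gt0 := root_dot_gt0 aD; have b_gt0 := root_dot_gt0 bD.
have kba : 2 * dot b a / dot a a < 0.
  by rewrite pmulr_llt0 ?invr_gt0 // pmulr_rlt0 // dotC.
have kab : 2 * dot a b / dot b b < 0 by rewrite pmulr_llt0 ?invr_gt0 // pmulr_rlt0.
have [kbaN1|kba_neqN1] := eqVneq (2 * dot b a / dot a a) (-1).
  by left; exists (a - (2 * dot a b / dot b b) *: b);
    [apply: refl | apply: coroot_reflect].
have [kabN1|kab_neqN1] := eqVneq (2 * dot a b / dot b b) (-1).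
  left; exists (b - (2 * dot b a / dot a a) *: a); first exact: refl.
  by rewrite [RHS]addrC; apply: coroot_reflect.
by right; apply: coroot_add_eq0; rewrite // int_lt0_neqN1_leN2 ?cartan.
Qed.

Lemma sum_coroots_non_obtuse L : all (mem D) L ->
  exists2 L', all (mem D) L' & sum_coroots L' = sum_coroots L /\ non_obtuse L'.
Proof.
have [k] := ubnP (size L); elim: k L => // k IH L sizeL LD.
have [/hasP[a aL /hasP[b bL dab]]|] :=
  boolP (has (fun a => has (fun b => dot a b < 0) L) L); last first.
  move=> /hasPn acute; exists L => //; split => // a b aL bL.
  by have /hasPn/(_ b bL) := acute a aL; rewrite -leNgt.
have aD := allP LD a aL; have bD := allP LD b bL.
have ba : b != a by apply: contraTneq dab => ->; rewrite -leNgt ltW ?root_dot_gt0.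
have bL' : b \in rem a L := rem_mem ba bL.
set L0 := rem b (rem a L).
have sizeL0 : (size L0).+2 = size L.
  have sizeL_gt0 : (0 < size L)%N by case: (L) aL.
  have sizeLa_gt0 : (0 < size (rem a L))%N by case: (rem a L) bL'.
  move: sizeL_gt0 sizeLa_gt0; rewrite /L0 !size_rem //; lia.
have L0D : all (mem D) L0.
  by apply/allP=> x /mem_rem/mem_rem; apply: (allP LD).
have sumL : sum_coroots L = coroot a + coroot b + sum_coroots L0.
  by rewrite /sum_coroots (big_rem a aL) (big_rem b bL') /= addrA.
have [[r rD r_sum]|ab0] := obtuse_roots_coroot_add aD bD dab.
  have size_rL0 : (size (r :: L0) < k)%N by rewrite -ltnS sizeL0.
  have [L' L'D [sumL' acute]] := IH _ size_rL0 (introT andP (conj rD L0D)).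
  by exists L' => //; rewrite sumL' sumL /sum_coroots big_cons r_sum.
have size_L0 : (size L0 < k)%N by rewrite -ltnS ltnW // sizeL0.
have [L' L'D [sumL' acute]] := IH _ size_L0 L0D.
by exists L' => //; rewrite sumL' sumL ab0 add0r.
Qed.

Lemma coroot_lattice_sum_coroots x :
  in_coroot_lattice D x -> is_sum_of_coroots D x.
Proof.
have sum0 : is_sum_of_coroots D 0 by exists [::]; rewrite ?/sum_coroots ?big_nil.
have sumD y z : is_sum_of_coroots D y -> is_sum_of_coroots D z ->
    is_sum_of_coroots D (y + z).
  move=> [L1 L1D ->] [L2 L2D ->]; exists (L1 ++ L2); first by rewrite all_cat L1D.
  by rewrite /sum_coroots big_cat.
have sumN y : is_sum_of_coroots D y -> is_sum_of_coroots D (- y).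
  move=> [L LD ->]; exists [seq - a | a <- L].
    by apply/allP=> _ /mapP[a aL ->]; apply/rootN/(allP LD).
  by rewrite /sum_coroots big_map -sumrN; apply: eq_bigr => a _; rewrite corootN.
have sumMz y (c : int) : is_sum_of_coroots D y -> is_sum_of_coroots D (y *~ c).
  move=> Dy; have sumMn (k : nat) : is_sum_of_coroots D (y *+ k).
    by elim: k => [|k IHk]; rewrite ?mulr0n // mulrS; apply: sumD.
  by case: c => k; rewrite ?NegzE ?mulrNz; [apply: sumMn | apply/sumN/sumMn].
move=> [c ->]; apply: (big_ind (is_sum_of_coroots D)) => // i _.
apply: sumMz; exists [:: tnth (in_tuple D) i]; first by rewrite /= mem_tnth.
by rewrite /sum_coroots big_seq1.
Qed.

Lemma dot_sum_coroots_ge2 g L : all (mem D) (g :: L) -> non_obtuse (g :: L) ->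
  2 <= dot (sum_coroots (g :: L)) g.
Proof.
move=> /allP LD acute; have gL := mem_head g L.
rewrite /sum_coroots dot_suml big_cons dot_coroot_self; last first.
  by apply: root_dot_gt0; apply: LD.
rewrite lerDl big_seq sumr_ge0 // => d dL.
have dL' : d \in g :: L by rewrite inE dL orbT.
by rewrite /coroot dotZl mulr_ge0 ?divr_ge0 ?dot_ge0 ?acute.
Qed.

End RootSystem.

Theorem mainTheorem2 (R : realType) (n : nat) (D : seq 'rV[R]_n)
  (hD : is_root_system D) (hN : short_roots_normalized D)
  (mu nu : 'rV[R]_n) :
  small D mu -> small D nu -> in_coroot_lattice D (mu - nu) -> mu = nu.
Proof.
move=> small_mu small_nu /(coroot_lattice_sum_coroots hD)[L LD munu].
have [[|g L'] L'D [sumL' acute]] := sum_coroots_non_obtuse hD LD.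
  by apply/eqP; rewrite -subr_eq0 munu -sumL' /sum_coroots big_nil.
have gD : g \in D := allP L'D g (mem_head g L').
have ge2 := dot_sum_coroots_ge2 hD L'D acute.
rewrite sumL' -munu dotBl in ge2.
have lt_nu := small_nu _ (rootN hD gD); rewrite (dotC nu) dotNl (dotC g) in lt_nu.
have lt_mu := small_mu g gD.
by exfalso; clear -ge2 lt_mu lt_nu; lra.
Qed.
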